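(* Let $R$ be an associative ring and let $X$ be a finite set of unknowns. Consider a finite system of equations over $R$, each of the form $\sum_i\prod_j c_{ij}x_{ij}^{k_{ij}}=0$ (finitely many summands, called monomials, each a finite product) with $c_{ij}\in R$, $x_{ij}\in X$, $k_{ij}\in\mathbb{Z}$. If $$\sum_{\text{equations}}\big((\text{number of monomials in the equation})-1\big)<|X|,$$ then the system is generalised homogeneous.
   Context: A system of such equations is generalised homogeneous if there is a nonzero map $\deg: X\to\mathbb{Z}$ such that, for each equation, the value $\sum_j k_{ij}\deg(x_{ij})$ (the degree of the $i$-th monomial) does not depend on $i$ (the common value may differ from equation to equation, but the same map $\deg$ is used for all equations). *)

From mathcomp Require Import all_boot all_order all_algebra.
Set Implicit Arguments. Unset Strict Implicit. Unset Printing Implicit Defensive.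
Import GRing.Theory Num.Theory.
Local Open Scope ring_scope.

(* A factor c * x^k of a monomial: (c, x, k) with c : R, x : X, k : int. *)
Definition factor (R : Type) (X : Type) := (R * X * int)%type.
Definition monomial (R X : Type) := seq (factor R X).
(* An equation  sum_i prod_j c_ij x_ij^k_ij = 0  is the list of its monomials. *)
Definition equation (R X : Type) := seq (monomial R X).
Definition eqsystem (R X : Type) := seq (equation R X).

Definition mon_degree (R X : Type) (deg : X -> int) (m : monomial R X) : int :=
  \sum_(f <- m) f.2 * deg f.1.2.

Definition gen_homogeneous (R X : eqType) (S : eqsystem R X) : Prop :=
  exists deg : X -> int, (exists x, deg x != 0) /\
    forall e, e \in S -> forall m1 m2, m1 \in e -> m2 \in e ->
      mon_degree deg m1 = mon_degree deg m2.

(** Record each monomial by its exponent vector [x |-> sum of the k_ij with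
    x_ij = x]; its degree under [deg] is the dot product with [deg].
    Homogeneity of an equation with monomials m_0, ..., m_r amounts to the
    r linear conditions <exp m_i - exp m_0, deg> = 0, so the whole system
    imposes fewer than |X| rational linear conditions on deg.  They have a
    nonzero rational solution, and clearing denominators makes it integral. *)

From mathcomp Require Import all_boot all_order all_algebra.
Set Implicit Arguments. Unset Strict Implicit. Unset Printing Implicit Defensive.
Import GRing.Theory Num.Theory.
Local Open Scope ring_scope.

Lemma linear_forms_common_nonzero_root (F : fieldType) (X : finType)
    (I : eqType) (s : seq I) (l : I -> X -> F) :
  (size s < #|X|)%N ->
  exists2 u : X -> F, (exists x, u x != 0) &
    forall i, i \in s -> \sum_x l i x * u x = 0.
Proof.
move=> lt_s_X.
pose A : 'M[F]_(#|X|, size s) :=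
  \matrix_(k, j) l (tnth (in_tuple s) j) (enum_val k).
have : kermx A != 0.
  rewrite -mxrank_eq0 mxrank_ker -lt0n subn_gt0.
  exact: leq_ltn_trans (rank_leq_col A) lt_s_X.
case/rowV0Pn => v /sub_kermxP vA0 v_neq0.
exists (fun x => v 0 (enum_rank x)).
  apply/existsP; apply: contraNT v_neq0; rewrite negb_exists => /forallP v0.
  by apply/eqP/rowP => k; rewrite mxE -[k]enum_valK; apply/eqP/negPn/v0.
move=> i s_i; have lt_i_s : (index i s < size s)%N by rewrite index_mem.
have := congr1 (fun w : 'rV_(size s) => w 0 (Ordinal lt_i_s)) vA0.
rewrite !mxE => /(etrans _); apply.
rewrite (reindex _ (onW_bij _ (enum_val_bij X))).
apply: eq_bigr => k _; rewrite enum_valK mxE mulrC.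
by rewrite (tnth_nth i) /= nth_index.
Qed.

Lemma scale_rat_to_int (X : finType) (u : X -> rat) :
  exists (d : X -> int) (c : rat), c != 0 /\ forall x, (d x)%:~R = c * u x.
Proof.
pose den y : int := denq (u y).
exists (fun x => numq (u x) * \prod_(y | y != x) den y).
exists (\prod_y (den y)%:~R); split.
  by rewrite prodf_seq_neq0; apply/allP => y _; rewrite intr_eq0 denq_neq0.
move=> x; rewrite rmorphM rmorph_prod [in RHS](bigD1 x) //= mulrAC; congr (_ * _).
by rewrite -{2}(divq_num_den (u x)) mulrC mulfVK // intr_eq0 denq_neq0.
Qed.

Section ExponentVectors.

Variables (R : eqType) (X : finType).
Implicit Types (m : monomial R X) (e : equation R X) (S : eqsystem R X).

Definition exponent m (x : X) : int := \sum_(f <- m | f.1.2 == x) f.2.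

Lemma mon_degree_exponent (deg : X -> int) m :
  mon_degree deg m = \sum_x exponent m x * deg x.
Proof.
rewrite /mon_degree /exponent.
under [RHS]eq_bigr do rewrite mulr_suml.
rewrite (exchange_big_dep xpredT) //=; apply: eq_bigr => f _.
by rewrite (big_pred1 f.1.2) // => x; rewrite eq_sym.
Qed.

Lemma mon_degreeB_scaled (d : X -> int) (u : X -> rat) (c : rat) m1 m2 :
    (forall x, (d x)%:~R = c * u x) ->
  (mon_degree d m2 - mon_degree d m1)%:~R
    = c * \sum_x (exponent m2 x - exponent m1 x)%:~R * u x.
Proof.
move=> dE; rewrite !mon_degree_exponent -sumrB rmorph_sum mulr_sumr.
by apply: eq_bigr => x _; rewrite -mulrBl rmorphM /= dE mulrCA.
Qed.

Definition head_pairs e : seq (monomial R X * monomial R X) :=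
  if e is m0 :: ms then [seq (m0, m) | m <- ms] else [::].

Definition system_head_pairs S := flatten [seq head_pairs e | e <- S].

Lemma size_system_head_pairs S :
  size (system_head_pairs S) = (\sum_(e <- S) (size e).-1)%N.
Proof.
rewrite size_flatten /shape -map_comp sumnE big_map.
by apply: eq_bigr => -[|m0 ms] _ //=; rewrite size_map.
Qed.

Lemma mem_system_head_pairs S e p :
  e \in S -> p \in head_pairs e -> p \in system_head_pairs S.
Proof. by move=> eS pe; apply/flattenP; exists (head_pairs e); rewrite ?map_f. Qed.

Lemma head_pairs_homogeneous (deg : X -> int) e :
    (forall p, p \in head_pairs e -> mon_degree deg p.1 = mon_degree deg p.2) ->
  forall m1 m2, m1 \in e -> m2 \in e -> mon_degree deg m1 = mon_degree deg m2.
Proof.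
case: e => // m0 ms hom.
suff deg_head m : m \in m0 :: ms -> mon_degree deg m = mon_degree deg m0.
  by move=> m1 m2 /deg_head -> /deg_head ->.
rewrite inE => /predU1P [-> // | m_ms].
by rewrite (hom (m0, m)) // map_f.
Qed.

End ExponentVectors.

Theorem mainTheorem8 (R : pzRingType) (X : finType) (S : eqsystem R X) :
  (\sum_(e <- S) (size e).-1 < #|X|)%N -> gen_homogeneous S.
Proof.
rewrite -size_system_head_pairs => lt_S_X.
have [u [x0 ux0] u_root] := linear_forms_common_nonzero_root
  (fun p x => (exponent p.2 x - exponent p.1 x)%:~R : rat) lt_S_X.
have [d [c [c_neq0 dE]]] := scale_rat_to_int u.
exists d; split.
  by exists x0; rewrite -(intr_eq0 rat) dE mulf_neq0.
move=> e eS; apply: head_pairs_homogeneous => p pe.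
apply/eqP; rewrite eq_sym -subr_eq0 -(intr_eq0 rat) (mon_degreeB_scaled _ _ dE).
by rewrite u_root ?mulr0 // (mem_system_head_pairs eS).
Qed.
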